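(* Fix a sensor index $k$, integers $N\ge1$, $B_k\ge1$, $\Delta^{\max}\ge2$, probabilities $p_{k,1},\dots,p_{k,N}\in[0,1]$, $\lambda_k\in[0,1]$, and any $\mu\ge0$. Let $\mathcal{S}_k=\{0,\dots,N\}\times\{0,\dots,B_k\}\times\{1,\dots,\Delta^{\max}\}$, $\mathcal{A}_k=\{0,1\}$, $c_k(s,a)=r\min\{(1-a\mathbf{1}\{b\ge1\})\Delta+1,\Delta^{\max}\}$ for $s=(r,b,\Delta)$, and let $\Pr(s'\mid s,a)$ be the transition probabilities defined as follows for $s'=(r',b',\Delta')$: $r'$ is distributed as $\sum_{n=1}^N X_n$ with independent $X_n\sim$ Bernoulli$(p_{k,n})$, independently of everything else; $b'=\min\{b+e-a\mathbf{1}\{b\ge1\},B_k\}$ with $e\sim$ Bernoulli$(\lambda_k)$ independent; $\Delta'=\min\{(1-a\mathbf{1}\{b\ge1\})\Delta+1,\Delta^{\max}\}$. Fix $s_{\mathrm{ref}}\in\mathcal{S}_k$, set $V^{(0)}\equiv0$, $h^{(0)}\equiv0$, and for $i\ge0$ let $V^{(i+1)}(s)=\min_{a\in\mathcal{A}_k}\big[c_k(s,a)+\mu a+\sum_{s'}\Pr(s'\mid s,a)h^{(i)}(s')\big]$, $h^{(i+1)}(s)=V^{(i+1)}(s)-V^{(i+1)}(s_{\mathrm{ref}})$; let $V=\lim_i V^{(i)}$, $h(s)=V(s)-V(s_{\mathrm{ref}})$, and $Q(s,a)=c_k(s,a)+\mu a+\sum_{s'\in\mathcal{S}_k}\Pr(s'\mid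 s,a)h(s')$. Let $\pi$ be a policy obtained from this procedure, i.e. $\pi(s)\in\arg\min_{a\in\mathcal{A}_k}Q(s,a)$ for all $s$. Then $\pi$ has a threshold structure with respect to the AoI: if the action $1$ is optimal in state $s=(r,b,\Delta)$ (i.e. $\pi(s)=1$), then for every state $\bar s=(r,b,\bar\Delta)\in\mathcal{S}_k$ with $\bar\Delta\ge\Delta$ the action $1$ is also optimal, i.e. $Q(\bar s,1)\le Q(\bar s,0)$.
   Context: The limit $V$ of the relative value iteration is assumed to exist. *)

From HB Require Import structures.
From mathcomp Require Import all_boot all_order all_algebra.
From mathcomp Require Import all_classical all_reals all_analysis.
Set Implicit Arguments. Unset Strict Implicit. Unset Printing Implicit Defensive.
Import Order.TTheory GRing.Theory Num.Theory.
Local Open Scope ring_scope.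

(* States s = (r, b, d) with r in {0..N}, b in {0..B}, and the AoI
   Delta = val d + 1 in {1..Dmax} (d : 'I_Dmax). *)
Definition state (N B Dmax : nat) := ('I_N.+1 * 'I_B.+1 * 'I_Dmax)%type.

Section MDP.
Variables (R : realType) (N B Dmax : nat).
Variables (p : 'I_N -> R) (lam mu : R).

Definition st_r (s : state N B Dmax) : nat := val s.1.1.
Definition st_b (s : state N B Dmax) : nat := val s.1.2.
Definition st_D (s : state N B Dmax) : nat := (val s.2).+1.

Definition eff (s : state N B Dmax) (a : bool) : bool := a && (0 < st_b s)%N.

Definition next_D (s : state N B Dmax) (a : bool) : nat :=
  minn ((if eff s a then 0 else st_D s) + 1) Dmax.

Definition cost (s : state N B Dmax) (a : bool) : R :=
  (st_r s)%:R * (next_D s a)%:R.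

(* Poisson-binomial pmf: Pr(sum_n X_n = r'), X_n ~ Bernoulli(p n) independent *)
Definition pr_r (r' : nat) : R :=
  \sum_(S : {set 'I_N} | #|S| == r')
     (\prod_(n in S) p n) * (\prod_(n in ~: S) (1 - p n)).

Definition pr_b (s : state N B Dmax) (a : bool) (b' : nat) : R :=
  \sum_(e : bool)
    (if e then lam else 1 - lam) *
    (b' == minn (st_b s + e - eff s a) B)%N%:R.

Definition trans (s : state N B Dmax) (a : bool) (s' : state N B Dmax) : R :=
  pr_r (st_r s') * pr_b s a (st_b s') * (st_D s' == next_D s a)%:R.

Definition bellman (h : state N B Dmax -> R) (s : state N B Dmax) (a : bool) : R :=
  cost s a + mu * (a : nat)%:R + \sum_(s' : state N B Dmax) trans s a s' * h s'.

Definition Vnext (h : state N B Dmax -> R) (s : state N B Dmax) : R :=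
  Num.min (bellman h s false) (bellman h s true).

Variable sref : state N B Dmax.

Fixpoint h_iter (i : nat) : state N B Dmax -> R :=
  match i with
  | 0 => fun _ => 0
  | i'.+1 => fun s => Vnext (h_iter i') s - Vnext (h_iter i') sref
  end.

Definition V_iter (i : nat) : state N B Dmax -> R :=
  match i with
  | 0 => fun _ => 0
  | i'.+1 => Vnext (h_iter i')
  end.

Definition Qfun (V : state N B Dmax -> R) (s : state N B Dmax) (a : bool) : R :=
  bellman (fun s' => V s' - V sref) s a.

End MDP.

From HB Require Import structures.
From mathcomp Require Import all_boot all_order all_algebra.
From mathcomp Require Import all_classical all_reals all_analysis.
From mathcomp Require Import zify lra.
Set Implicit Arguments. Unset Strict Implicit. Unset Printing Implicit Defensive.
Import Order.TTheory GRing.Theory Num.Theory.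
Import numFieldNormedType.Exports.
Local Open Scope classical_set_scope.
Local Open Scope ring_scope.

(* Relative value iteration preserves monotonicity in the AoI: the cost and the
   next AoI are nondecreasing in Delta, and the next (r, b) is independent of
   Delta, so each iterate h^(i), hence the limit V, is nondecreasing in Delta.
   Transmitting with a nonempty battery resets the AoI, so Q(s, 1) does not
   depend on Delta while Q(s, 0) grows with it; with an empty battery,
   transmitting only adds mu. *)

Section AoIMonotonicity.
Variables (R : realType) (N B Dmax : nat).
Variables (p : 'I_N -> R) (lam mu : R).

Local Notation state := (state N B Dmax).

Definition AoI_nondecreasing (f : state -> R) :=
  forall s s', st_r s = st_r s' -> st_b s = st_b s' ->
    (st_D s <= st_D s')%N -> f s <= f s'.

Lemma next_D_mono (s s' : state) a :
  st_b s = st_b s' -> (st_D s <= st_D s')%N -> (next_D s a <= next_D s' a)%N.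
Proof. by rewrite /next_D /eff => <- le_D; case: (a && _) => /=; lia. Qed.

Lemma next_D_gt0 (s : state) a : (0 < next_D s a)%N.
Proof. by rewrite /next_D; have := ltn_ord s.2; lia. Qed.

Lemma next_D_pred_lt (s : state) a : ((next_D s a).-1 < Dmax)%N.
Proof. by have := ltn_ord s.2; rewrite /next_D; lia. Qed.

Definition next_AoI (s : state) a : 'I_Dmax := Ordinal (next_D_pred_lt s a).

Lemma sum_trans (h : state -> R) (s : state) a :
  \sum_(s' : state) trans p lam s a s' * h s' =
  \sum_(x : 'I_N.+1 * 'I_B.+1)
     pr_r p (val x.1) * pr_b lam s a (val x.2) * h (x, next_AoI s a).
Proof.
pose F x d := trans p lam s a (x, d) * h (x, d).
transitivity (\sum_(q : state) F q.1 q.2); first by apply: eq_bigr => -[x d].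
rewrite -pair_bigA /F /=.
apply: eq_bigr => x _; rewrite (bigD1 (next_AoI s a)) //= big1 => [|d ne_d].
  by rewrite /trans /st_D /= prednK ?next_D_gt0 // eqxx mulr1 addr0.
rewrite /trans /st_D /=; case: eqP => [eq_d|]; last by rewrite mulr0 mul0r.
by case/eqP: ne_d; apply: val_inj; rewrite /= -eq_d.
Qed.

Lemma bellman_eq (h : state -> R) (s s' : state) a :
  st_r s = st_r s' -> st_b s = st_b s' -> next_D s a = next_D s' a ->
  bellman p lam mu h s a = bellman p lam mu h s' a.
Proof.
move=> eq_r eq_b eq_D; rewrite /bellman /cost eq_r eq_D.
congr (_ + _); apply: eq_bigr => s'' _.
by rewrite /trans /pr_b /eff eq_b eq_D.
Qed.

Lemma bellman_empty_battery (h : state -> R) (s : state) :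
  st_b s = 0%N -> bellman p lam mu h s true = bellman p lam mu h s false + mu.
Proof.
move=> b0; have eff_eq : eff s true = eff s false by rewrite /eff b0.
by rewrite /bellman /cost /trans /next_D /pr_b eff_eq /= mulr1 mulr0 addr0 addrAC.
Qed.

Hypothesis p_prob : forall n, 0 <= p n <= 1.
Hypothesis lam_prob : 0 <= lam <= 1.

Lemma pr_r_ge0 r : 0 <= pr_r p r.
Proof.
apply: sumr_ge0 => S _; apply: mulr_ge0; apply: prodr_ge0 => n _;
  by have /andP[p_ge0 p_le1] := p_prob n; rewrite ?subr_ge0.
Qed.

Lemma pr_b_ge0 (s : state) a b' : 0 <= pr_b lam s a b'.
Proof.
case/andP: lam_prob => lam_ge0 lam_le1.
apply: sumr_ge0 => e _; apply: mulr_ge0; last exact: ler0n.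
by case: e; rewrite ?subr_ge0.
Qed.

Lemma bellman_mono {h : state -> R} {s s' : state} {a : bool} :
  AoI_nondecreasing h ->
  st_r s = st_r s' -> st_b s = st_b s' -> (next_D s a <= next_D s' a)%N ->
  bellman p lam mu h s a <= bellman p lam mu h s' a.
Proof.
move=> h_mono eq_r eq_b le_D; rewrite /bellman.
apply: lerD; first by rewrite lerD2r /cost eq_r ler_wpM2l ?ler0n ?ler_nat.
rewrite !sum_trans; have -> : pr_b lam s a = pr_b lam s' a by rewrite /pr_b /eff eq_b.
apply: ler_sum => x _; apply: ler_wpM2l; first by rewrite mulr_ge0 ?pr_r_ge0 ?pr_b_ge0.
by apply: h_mono => //; rewrite /st_D /= !prednK ?next_D_gt0.
Qed.

Lemma Vnext_nondecreasing (h : state -> R) :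
  AoI_nondecreasing h -> AoI_nondecreasing (Vnext p lam mu h).
Proof.
move=> h_mono s s' eq_r eq_b le_D; rewrite /Vnext le_min !ge_min.
by rewrite !(bellman_mono h_mono eq_r eq_b) ?orbT ?next_D_mono.
Qed.

Variable sref : state.

Lemma h_iter_nondecreasing i : AoI_nondecreasing (h_iter p lam mu sref i).
Proof.
elim: i => [|i IH] s s' eq_r eq_b le_D //=.
by rewrite lerD2r; apply: Vnext_nondecreasing.
Qed.

Lemma V_iter_nondecreasing i : AoI_nondecreasing (V_iter p lam mu sref i).
Proof. by case: i => [|i] //=; apply/Vnext_nondecreasing/h_iter_nondecreasing. Qed.

Lemma lim_V_iter_nondecreasing (V : state -> R) :
  (forall s, (fun i => V_iter p lam mu sref i s) @ \oo --> V s) ->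
  AoI_nondecreasing V.
Proof.
move=> V_lim s s' eq_r eq_b le_D; apply: (ler_cvg_to (V_lim s) (V_lim s')).
by apply: nearW => i; apply: V_iter_nondecreasing.
Qed.

End AoIMonotonicity.

Theorem theorem1 (R : realType) (N B Dmax : nat)
  (hN : (1 <= N)%N) (hB : (1 <= B)%N) (hD : (2 <= Dmax)%N)
  (p : 'I_N -> R) (hp : forall n, 0 <= p n <= 1)
  (lam : R) (hlam : 0 <= lam <= 1) (mu : R) (hmu : 0 <= mu)
  (sref : state N B Dmax)
  (V : state N B Dmax -> R)
  (hV : forall s, (fun i => V_iter p lam mu sref i s) @ \oo --> V s)
  (pi : state N B Dmax -> bool)
  (hpi : forall s a, Qfun p lam mu sref V s (pi s) <= Qfun p lam mu sref V s a)
  (s : state N B Dmax) (hs : pi s = true)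
  (sbar : state N B Dmax)
  (hr : st_r sbar = st_r s) (hb : st_b sbar = st_b s)
  (hDD : (st_D s <= st_D sbar)%N) :
  Qfun p lam mu sref V sbar true <= Qfun p lam mu sref V sbar false.
Proof.
have V_mono := lim_V_iter_nondecreasing hp hlam hV.
have h_mono : AoI_nondecreasing (fun s' => V s' - V sref).
  by move=> s1 s2 eq_r eq_b le_D; rewrite lerD2r V_mono.
have := hpi s false; rewrite hs /Qfun.
have [b0|b_pos] := posnP (st_b s).
  by rewrite !bellman_empty_battery ?hb //; lra.
rewrite (bellman_eq p lam mu _ hr hb) => [opt_s|]; last by rewrite /next_D /eff hb b_pos.
apply: le_trans opt_s (bellman_mono mu hp hlam h_mono (esym hr) (esym hb) _).
exact: next_D_mono (esym hb) hDD.
Qed.
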